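(* Let $\mathcal{B}\subseteq\mathcal{C}^n$ be $f$-closed for all $f\in\mathbb{R}^n\setminus\mathbb{Z}^n$, and let $L\in\mathcal{C}^n$ be a polyhedron given by $L=\operatorname{conv}(V)+\operatorname{cone}(W)$, where $V$ is a nonempty finite subset of $\mathbb{R}^n$ and $W$ is a finite (possibly empty) subset of $\mathbb{R}^n\setminus\{0\}$. Then \[\frac{1}{|V|+|W|+1}\sup_{f\in\mathbb{R}^n\setminus\mathbb{Z}^n}\inf_{B\in\mathcal{B}}\rho_f(B,L)\le\rho(\mathcal{B},L)\le\sup_{f\in\mathbb{R}^n\setminus\mathbb{Z}^n}\inf_{B\in\mathcal{B}}\rho_f(B,L).\]
   Context: $\mathcal{C}^n$ is the family of all $n$-dimensional closed convex subsets of $\mathbb{R}^n$. For $B\in\mathcal{C}^n$ with $0\in\operatorname{int}(B)$, $\psi_B(r)=\inf\{\lambda>0:r\in\lambda B\}$. For $k\in\mathbb{N}$, $R=(r_1,\dots,r_k)\in\mathbb{R}^{n\times k}$, $f\in\mathbb{R}^n\setminus\mathbb{Z}^n$, $B\in\mathcal{C}^n$: if $f\in\operatorname{int}(B)$, $C_B(R,f)=\{s\in\mathbb{R}^k_{\ge0}:\sum_j s_j\psi_{B-f}(r_j)\ge1\}$, otherwise $C_B(R,f)=\mathbb{R}^k_{\ge0}$; $C_{\mathcal{B}}(R,f)=\bigcap_{B\in\mathcal{B}}C_B(R,f)$ ($=\mathbb{R}^k_{\ge0}$ if $\mathcal{B}=\emptyset$). $\rho_f(B,L)=\inf\{\alpha>0:C_B(R,f)\subseteq\frac1\alpha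 C_L(R,f)$ for all $k$, $R\}$; $\rho_f(\mathcal{B},L)=\inf\{\alpha>0:C_{\mathcal{B}}(R,f)\subseteq\frac1\alpha C_L(R,f)$ for all $k$, $R\}$; $\rho(\mathcal{B},L)=\sup_{f\in\mathbb{R}^n\setminus\mathbb{Z}^n}\rho_f(\mathcal{B},L)$. $\mathcal{B}_f$ denotes the sets of $\mathcal{B}$ containing $f$ in the interior, $\mathcal{C}^n_f$ likewise. $\mathcal{B}$ is $f$-closed if whenever $B_t\in\mathcal{B}_f$, $C\in\mathcal{C}^n_f$ and $\psi_{B_t-f}\to\psi_{C-f}$ pointwise, then $C\in\mathcal{B}_f$. *)

From HB Require Import structures.
From mathcomp Require Import all_boot all_order all_algebra.
From mathcomp Require Import all_classical all_reals all_analysis.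
Set Implicit Arguments. Unset Strict Implicit. Unset Printing Implicit Defensive.
Import Order.TTheory GRing.Theory Num.Theory.
Import numFieldNormedType.Exports.
Local Open Scope classical_set_scope.
Local Open Scope ring_scope.

Section Defs.
Variables (R : realType) (n : nat).
Notation vec := 'cV[R]_n.

Definition inZn (f : vec) : Prop := forall i : 'I_n, f i ord0 \is a Num.int.

Definition convex_set (B : set vec) : Prop :=
  forall x y t, B x -> B y -> 0 <= t -> t <= 1 -> B (t *: x + (1 - t) *: y).

(* C^n : n-dimensional closed convex subsets of R^n
   (for convex sets, n-dimensional <=> nonempty interior) *)
Definition Cn (B : set vec) : Prop :=
  closed B /\ convex_set B /\ interior B !=set0.

Definition translate (B : set vec) (f : vec) : set vec := [set b - f | b in B].

Definition gauge (K : set vec) (r : vec) : R :=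
  inf [set l : R | 0 < l /\ exists b, K b /\ r = l *: b].

Definition CB (B : set vec) (f : vec) (k : nat) (Rm : 'M[R]_(n, k)) : set 'cV[R]_k :=
  [set s : 'cV[R]_k | (forall j, 0 <= s j ord0) /\
     (interior B f -> 1 <= \sum_(j < k) s j ord0 * gauge (translate B f) (col j Rm))].

(* C_calB(R,f) = intersection over calB (orthant if calB is empty) *)
Definition CcalB (calB : set (set vec)) (f : vec) (k : nat) (Rm : 'M[R]_(n, k))
  : set 'cV[R]_k :=
  [set s : 'cV[R]_k | (forall j, 0 <= s j ord0) /\ (forall B, calB B -> CB B f Rm s)].

Definition scale_set (k : nat) (c : R) (S : set 'cV[R]_k) : set 'cV[R]_k :=
  [set c *: s | s in S].

Definition rho_gen (C1 C2 : forall k, 'M[R]_(n, k) -> set 'cV[R]_k) : \bar R :=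
  ereal_inf [set a%:E | a in
    [set a : R | 0 < a /\
       forall (k : nat) (Rm : 'M[R]_(n, k)), C1 k Rm `<=` scale_set a^-1 (C2 k Rm)]].

Definition rho_f (f : vec) (B L : set vec) : \bar R :=
  rho_gen (fun k Rm => CB B f Rm) (fun k Rm => CB L f Rm).

Definition rho_fam_f (f : vec) (calB : set (set vec)) (L : set vec) : \bar R :=
  rho_gen (fun k Rm => CcalB calB f Rm) (fun k Rm => CB L f Rm).

Definition rho (calB : set (set vec)) (L : set vec) : \bar R :=
  ereal_sup [set rho_fam_f f calB L | f in [set f | ~ inZn f]].

Definition sup_inf_rho (calB : set (set vec)) (L : set vec) : \bar R :=
  ereal_sup [set ereal_inf [set rho_f f B L | B in calB] | f in [set f | ~ inZn f]].

Definition f_closed (f : vec) (calB : set (set vec)) : Prop :=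
  forall (Bt : nat -> set vec) (C : set vec),
    (forall t, calB (Bt t) /\ interior (Bt t) f) ->
    Cn C -> interior C f ->
    (forall r, (fun t => gauge (translate (Bt t) f) r) @ \oo --> gauge (translate C f) r) ->
    calB C /\ interior C f.

Definition conv_hull (V : seq vec) : set vec :=
  [set x | exists lam : 'I_(size V) -> R, (forall i, 0 <= lam i) /\
     \sum_(i < size V) lam i = 1 /\ x = \sum_(i < size V) lam i *: V`_i].

Definition cone_hull (W : seq vec) : set vec :=
  [set x | exists mu : 'I_(size W) -> R, (forall i, 0 <= mu i) /\
     x = \sum_(i < size W) mu i *: W`_i].

Definition minkowski_sum (A B : set vec) : set vec := [set a + b | a in A & b in B].

End Defs.

From Pilot Require Import Defs.
From HB Require Import structures.
From mathcomp Require Import all_boot all_order all_algebra.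
From mathcomp Require Import all_classical all_reals all_analysis.
From mathcomp Require Import unstable ring lra.
Import Order.TTheory GRing.Theory Num.Theory.
Import numFieldNormedType.Exports.
Local Open Scope classical_set_scope.
Local Open Scope ring_scope.

Set Implicit Arguments. Unset Strict Implicit.

(* Upper bound: C_calB(R, f) lies in every C_B(R, f), so rho_f(calB, L) <= rho_f(B, L).

   Lower bound, for f outside Z^n in the interior of L and a admissible for
   rho_f(calB, L), b > |V| a: the gauge of L - f is at most 1 on V - f and vanishes
   on W, so for every N the point s = (1/b, ..., 1/b, N+1, ..., N+1) with columns
   (V - f, W) lies outside (1/a) C_L, hence outside C_calB.  A member B_N of calB
   missing s has gauge < b on V - f and < 1/(N+1) on W.  These gauges are
   sublinear and, because f is interior to the polyhedron L, pointwise bounded,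
   hence uniformly Lipschitz; a diagonal subsequence converges pointwise to a
   sublinear psi, the gauge of C = {x | psi(x - f) <= 1}.  By f-closedness C is in
   calB, and psi <= b on V - f, psi = 0 on W give psi <= b psi_(L-f), so
   rho_f(C, L) <= b.  This yields the constant 1/|V|, better than
   1/(|V|+|W|+1). *)

Section Gauge.
Variables (R : realType) (n : nat).
Notation vec := 'cV[R]_n.
Implicit Types (K : set vec) (r x y : vec).

Definition gauge_set K r : set R :=
  [set l : R | 0 < l /\ exists b, K b /\ r = l *: b].

Definition absorbing K := forall r, gauge_set K r !=set0.

Definition absorbing_convex K := [/\ Defs.convex_set K, K 0 & absorbing K].

Lemma gauge_le K r l : gauge_set K r l -> gauge K r <= l.
Proof. by move=> rl; apply: ge_inf rl; exists 0 => l' [/ltW]. Qed.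

Lemma gauge_le_scale K b c : K b -> 0 < c -> gauge K (c *: b) <= c.
Proof. by move=> Kb c0; apply: gauge_le; split => //; exists b. Qed.

Variable K : set vec.
Hypothesis hK : absorbing_convex K.

Let gauge_set_has_inf r : has_inf (gauge_set K r).
Proof. by case: hK => _ _ Kabs; split; [exact: Kabs | exists 0 => l [/ltW]]. Qed.

Lemma gauge_ge0 r : 0 <= gauge K r.
Proof. by apply: lb_le_inf (gauge_set_has_inf r).1 _ => l [/ltW]. Qed.

Lemma gauge0 : gauge K 0 = 0.
Proof.
case: hK => _ K0 _; apply/eqP; rewrite eq_le gauge_ge0 andbT.
apply/ler_addgt0Pr => e e0; rewrite add0r.
by apply: gauge_le; split => //; exists 0; rewrite scaler0.
Qed.

Lemma gaugeZ t r : 0 <= t -> gauge K (t *: r) <= t * gauge K r.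
Proof.
rewrite le_eqVlt => /orP[/eqP<-|t0]; first by rewrite scale0r mul0r gauge0.
case: hK => _ _ Kabs; rewrite -ler_pdivrMl //; apply: lb_le_inf; first exact: Kabs.
move=> l [l0 [b [Kb ->]]]; rewrite ler_pdivrMl // scalerA.
by apply: gauge_le_scale => //; rewrite mulr_gt0.
Qed.

Lemma gaugeD x y : gauge K (x + y) <= gauge K x + gauge K y.
Proof.
case: hK => Kc _ _; apply/ler_addgt0Pr => e e0.
have e2 : 0 < e / 2 by rewrite divr_gt0.
have [l1 [l10 [b1 [Kb1 ->]]] h1] := inf_adherent e2 (gauge_set_has_inf x).
have [l2 [l20 [b2 [Kb2 ->]]] h2] := inf_adherent e2 (gauge_set_has_inf y).
have l0 : 0 < l1 + l2 by rewrite addr_gt0.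
pose t := l1 / (l1 + l2).
have -> : l1 *: b1 + l2 *: b2 = (l1 + l2) *: (t *: b1 + (1 - t) *: b2).
  rewrite scalerDr !scalerA /t mulrCA divff ?gt_eqF // mulr1; congr (_ + _).
  by congr (_ *: _); field; rewrite gt_eqF.
apply: le_trans (gauge_le_scale _ l0) _.
  apply: Kc => //; first by rewrite divr_ge0 // ltW.
  by rewrite ler_pdivrMr // mul1r lerDl ltW.
rewrite /gauge; lra.
Qed.

Lemma gauge_sum m (c : 'I_m -> R) (X : 'I_m -> vec) : (forall i, 0 <= c i) ->
  gauge K (\sum_(i < m) c i *: X i) <= \sum_(i < m) c i * gauge K (X i).
Proof.
move=> c0; apply: (big_ind2 (fun a b => gauge K a <= b)) => //.
- by rewrite gauge0.
- by move=> a1 b1 a2 b2 h1 h2; apply: le_trans (gaugeD _ _) _; exact: lerD.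
- by move=> i _; exact: gaugeZ.
Qed.

Lemma gauge_lipschitz (Lam : R) x y : (forall z, gauge K z <= Lam * `|z|) ->
  `|gauge K x - gauge K y| <= Lam * `|x - y|.
Proof.
move=> hLam; rewrite ler_norml; apply/andP; split.
  have := gaugeD x (y - x); rewrite addrC subrK => hD.
  have := hLam (y - x); rewrite -normrN opprB; lra.
have := gaugeD y (x - y); rewrite addrC subrK => hD.
have := hLam (x - y); lra.
Qed.

Lemma gauge_le_mul_gauge (L : set vec) b : absorbing L -> 0 < b ->
  (forall z, L z -> gauge K z <= b) -> forall r, gauge K r <= b * gauge L r.
Proof.
move=> Labs b0 hL r; rewrite -ler_pdivrMl //; apply: lb_le_inf; first exact: Labs.
move=> l [l0 [z [Lz ->]]]; rewrite ler_pdivrMl //.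
apply: le_trans (gaugeZ _ (ltW l0)) _; rewrite mulrC ler_wpM2r ?hL //; exact: ltW.
Qed.

End Gauge.

Section Interior.
Variables (R : realType) (n : nat).
Notation vec := 'cV[R]_n.
Implicit Types (B : set vec) (f r x : vec).

Lemma entry_le_norm x i : `|x i ord0| <= `|x|.
Proof.
rewrite [leRHS]/Num.Def.normr /= mx_normrE; apply/bigmax_geP; right => /=.
by exists (i, ord0).
Qed.

Lemma norm_lt_entries x e : 0 < e -> (forall i, `|x i ord0| < e) -> `|x| < e.
Proof.
move=> e0 hx; rewrite [ltLHS]/Num.Def.normr /= mx_normrE; apply/bigmax_ltP.
by split => // -[i j] _ /=; rewrite ord1.
Qed.

Lemma interior_normP B f :
  interior B f <-> exists2 e, 0 < e & forall y, `|y| < e -> B (f + y).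
Proof.
split.
  move=> /nbhs_ballP [e e0 hB]; exists e => // y ye; apply: hB.
  by rewrite -ball_normE /ball_ /= opprD addrA subrr add0r normrN.
move=> [e e0 hB]; apply/nbhs_ballP; exists e => // y.
rewrite -ball_normE /ball_ /= => fy.
by rewrite -[y](addrNK f) addrC; apply: hB; rewrite -normrN opprB.
Qed.

Lemma interior_ray B f r : interior B f -> exists2 t, 0 < t & B (f + t *: r).
Proof.
move=> /interior_normP [e e0 hB].
have r1 : 0 < `|r| + 1 by rewrite ltr_wpDl.
exists (e / (`|r| + 1) / 2); first by rewrite !divr_gt0.
apply: hB; rewrite normrZ ger0_norm; last by rewrite !divr_ge0 // ltW.
have q1 : `|r| / (`|r| + 1) <= 1 by rewrite ler_pdivrMr // mul1r lerDl.
have q0 : 0 <= `|r| / (`|r| + 1) by rewrite divr_ge0 // ltW.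
have -> : e / (`|r| + 1) / 2 * `|r| = e / 2 * (`|r| / (`|r| + 1)).
  by field; rewrite gt_eqF.
nra.
Qed.

Lemma translate_convex B f : Defs.convex_set B -> Defs.convex_set (translate B f).
Proof.
move=> Bc _ _ t [x Bx <-] [y By <-] t0 t1; exists (t *: x + (1 - t) *: y).
  exact: Bc.
by apply/matrixP => i j; rewrite !mxE; ring.
Qed.

Lemma translate_absorbing B f : interior B f -> absorbing (translate B f).
Proof.
move=> Bf r; have [t t0 Bt] := interior_ray r Bf.
exists t^-1; split; first by rewrite invr_gt0.
exists (t *: r); split; first by exists (f + t *: r) => //; rewrite addrC addKr.
by rewrite scalerA mulVf ?gt_eqF // scale1r.
Qed.

Lemma translate_absorbing_convex B f :
  Defs.convex_set B -> interior B f -> absorbing_convex (translate B f).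
Proof.
move=> Bc Bf; split; [exact: translate_convex | | exact: translate_absorbing].
by exists f; [exact: interior_subset | rewrite subrr].
Qed.

End Interior.

Lemma gauge_uniform_bound (R : realType) (n : nat) (Ks : nat -> set 'cV[R]_n) :
  (forall N, absorbing_convex (Ks N)) ->
  (forall y, exists c, forall N, gauge (Ks N) y <= c) ->
  exists2 Lam, 0 < Lam & forall N x, gauge (Ks N) x <= Lam * `|x|.
Proof.
move=> hK hb.
pose e (kb : 'I_n * bool) : 'cV[R]_n := (if kb.2 then 1 else -1) *: delta_mx kb.1 ord0.
have /fin_all_exists [c hc] : forall kb, exists c, forall N, gauge (Ks N) (e kb) <= c.
  by move=> kb; exact: hb.
pose S := \sum_kb `|c kb|.
have S0 : 0 <= S by rewrite sumr_ge0.
exists (S * n%:R + 1) => [|N x]; first by rewrite ltr_wpDl // mulr_ge0.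
have xE : x = \sum_(k < n) `|x k ord0| *: e (k, 0 <= x k ord0).
  rewrite [LHS]matrix_sum_delta; apply: eq_bigr => k _; rewrite big_ord1 scalerA /=.
  congr (_ *: _); case: ifP => x0; first by rewrite mulr1 ger0_norm.
  by rewrite ltr0_norm ?mulrN1 ?opprK // ltNge x0.
rewrite {1}xE; apply: le_trans (gauge_sum (hK N) _ (fun k => normr_ge0 (x k ord0))) _.
apply: (@le_trans _ _ (\sum_(k < n) `|x| * S)).
  apply: ler_sum => k _.
  apply: ler_pM; rewrite ?normr_ge0 ?(gauge_ge0 (hK N)) ?entry_le_norm //.
  apply: le_trans (hc _ N) _; apply: le_trans (ler_norm _) _.
  by rewrite /S (bigD1 (k, 0 <= x k ord0)) //= lerDl sumr_ge0.
have -> : \sum_(k < n) `|x| * S = S * n%:R * `|x|.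
  by rewrite sumr_const card_ord -mulr_natr; ring.
by rewrite mulrDl mul1r lerDl normr_ge0.
Qed.

Section Subsequences.
Variable R : realType.

Lemma bounded_cvg_extraction (s : nat -> R) (M : R) : (forall N, `|s N| <= M) ->
  exists2 g : nat -> nat, (forall N, (N <= g N)%N) & cvgn (s \o g).
Proof.
move=> sM; have [|g g_mono gc] := @bolzano_weierstrass _ s.
  exists M; split; first by rewrite num_real.
  by move=> M' MM' N _; apply: le_trans (sM N) (ltW MM').
by exists g => //; exact: mono_leq_infl.
Qed.

Lemma diagonal_cvg_extraction (s : nat -> nat -> R) (M : nat -> R) :
  (forall p N, `|s p N| <= M p) ->
  exists2 phi : nat -> nat, (forall N, (N <= phi N)%N) & forall p, cvgn (s p \o phi).
Proof.
move=> sM.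
have /choice [ext hext] : forall pg : nat * (nat -> nat), exists g : nat -> nat,
    (forall N, (N <= g N)%N) /\ cvgn (s pg.1 \o pg.2 \o g).
  move=> [p g]; have [h h1 h2] := @bounded_cvg_extraction (s p \o g) (M p) (fun N => sM p _).
  by exists h.
pose fix sig p : nat -> nat := if p is p'.+1 then sig p' \o ext (p', sig p') else id.
have sig_infl p N : (N <= sig p N)%N.
  elim: p N => [//|p ih] N /=; apply: leq_trans (ih _); exact: (hext (p, sig p)).1.
have sig_refine p q : exists2 h : nat -> nat,
    (forall N, (N <= h N)%N) & forall N, sig (p + q)%N N = sig p (h N).
  elim: q => [|q [h h1 h2]]; first by exists id => // N; rewrite addn0.
  exists (h \o ext (p + q, sig (p + q))%N) => [N|N]; last by rewrite addnS /= h2.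
  by apply: leq_trans (h1 _); exact: (hext (_, _)).1.
exists (fun N => sig N.+1 N) => [N|p]; first exact: sig_infl.
have /cvg_ex [l sl] := (hext (p, sig p)).2.
apply/cvg_ex; exists l; apply/cvgrPdist_lt => e e0.
have /cvgrPdist_lt /(_ e e0) [M0 _ hM0] := sl.
exists (maxn M0 p.+1) => // N; rewrite /= geq_max => /andP[M0N pN].
change (`|l - s p (sig N.+1 N)| < e).
have [h h1 h2] := sig_refine p.+1 (N - p)%N.
move: (h2 N); rewrite addSn subnKC ?(ltnW pN) // => ->.
by apply: hM0; apply: leq_trans M0N (h1 N).
Qed.

End Subsequences.

Section EquiLipschitz.
Variables (R : realType) (n : nat).
Notation vec := 'cV[R]_n.

Definition rational_point (p : nat) : vec :=
  if (unpickle p : option 'cV[rat]_n) is Some q then map_mx ratr q else 0.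

Lemma rational_point_dense (x : vec) e : 0 < e -> exists p, `|x - rational_point p| < e.
Proof.
move=> e0; have e2 : 0 < e / 2 by rewrite divr_gt0.
have /fin_all_exists [q hq] : forall i : 'I_n, exists q : rat,
    ratr q \in `](x i ord0 - e / 2), (x i ord0 + e / 2)[.
  by move=> i; apply: rat_in_itvoo; lra.
exists (pickle (\col_i q i : 'cV[rat]_n)); rewrite /rational_point pickleK.
apply: norm_lt_entries => // i; rewrite !mxE.
move: (hq i); rewrite in_itv /= => /andP[lo hi]; rewrite ltr_norml; apply/andP; split; lra.
Qed.

Lemma equilipschitz_cvg_extraction (u : nat -> vec -> R) (Lam : R) : 0 < Lam ->
  (forall N x, `|u N x| <= Lam * `|x|) ->
  (forall N x y, `|u N x - u N y| <= Lam * `|x - y|) ->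
  exists2 phi : nat -> nat, (forall N, (N <= phi N)%N) &
    forall x, cvgn (fun N => u (phi N) x).
Proof.
move=> Lam0 u_le u_lip.
have [phi phi_infl phi_cvg] := @diagonal_cvg_extraction R
  (fun p N => u N (rational_point p)) (fun p => Lam * `|rational_point p|)
  (fun p N => u_le N _).
exists phi => // x; apply/cauchy_cvgP/cauchy_exP => e e0.
have [p xp] := rational_point_dense x (divr_gt0 (divr_gt0 e0 (ltr0Sn _ 3)) Lam0).
have /cvg_ex [l /cvgrPdist_lt /(_ (e / 4)) hl] := phi_cvg p.
have [M _ hM] := hl (divr_gt0 e0 (ltr0Sn _ 3)).
exists l; exists M => // N MN; rewrite -ball_normE /=.
have lp := hM N MN; have px := u_lip (phi N) (rational_point p) x.
move: lp px => /=; set a := u _ (rational_point p); set b := u _ x => lp px.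
have Lpx : Lam * `|rational_point p - x| <= e / 4.
  by rewrite -normrN opprB -ler_pdivlMl // mulrC; exact: ltW.
have := ler_distD a l b; rewrite distrC; lra.
Qed.

End EquiLipschitz.

Section Sublinear.
Variables (R : realType) (n : nat).
Notation vec := 'cV[R]_n.
Implicit Types (p : vec -> R) (x y : vec).

Definition sublinear p :=
  (forall x y, p (x + y) <= p x + p y) /\ (forall t x, 0 <= t -> p (t *: x) <= t * p x).

Lemma gauge_sublinear K : absorbing_convex K -> sublinear (gauge K).
Proof. by move=> hK; split; [exact: gaugeD | exact: gaugeZ]. Qed.

Lemma sublinearZ p t x : sublinear p -> 0 < t -> p (t *: x) = t * p x.
Proof.
move=> [_ pZ] t0; apply/eqP; rewrite eq_le pZ ?(ltW t0) //=.
have := pZ t^-1 (t *: x); rewrite invr_ge0 (ltW t0) scalerA mulVf ?gt_eqF // scale1r.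
by move=> /(_ isT) /(ler_wpM2l (ltW t0)); rewrite mulrA mulfV ?gt_eqF // mul1r.
Qed.

Lemma sublinear_limn (u : nat -> vec -> R) : (forall N, sublinear (u N)) ->
  (forall x, cvgn (fun N => u N x)) -> sublinear (fun x => limn (fun N => u N x)).
Proof.
move=> u_sub u_cvg; split => [x y|t x t0].
  rewrite -limD //; apply: ler_lim => //; first exact: is_cvgD.
  by apply: nearW => N; exact: (u_sub N).1.
have tu : (fun N => t * u N x) @ \oo --> t * limn (fun N => u N x).
  by apply: cvgM => //; exact: cvg_cst.
rewrite -(cvg_lim _ tu) //; apply: ler_lim => //; first exact: cvgP tu.
by apply: nearW => N; exact: (u_sub N).2.
Qed.

Variables (p : vec -> R) (Lam : R).
Hypotheses (p_ge0 : forall x, 0 <= p x) (p_sub : sublinear p).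
Hypotheses (Lam0 : 0 < Lam) (p_le : forall x, p x <= Lam * `|x|).
Variable f : vec.

Definition unit_ball := [set x : vec | p (x - f) <= 1].

Lemma interior_unit_ball : interior unit_ball f.
Proof.
apply/interior_normP; exists Lam^-1; first by rewrite invr_gt0.
move=> y y_lt; rewrite /unit_ball /= addrC addKr.
by apply: le_trans (p_le y) _; rewrite -ler_pdivlMl // mulr1 ltW.
Qed.

Lemma closed_unit_ball : closed unit_ball.
Proof.
move=> x clx; rewrite /unit_ball /=; apply/ler_addgt0Pr => e e0.
have eL : 0 < e / Lam by rewrite divr_gt0.
have [y [y1 xy]] := clx (ball x (e / Lam)) (nbhsx_ballx _ _ eL).
move: xy; rewrite -ball_normE /ball_ /= => xy.
have := p_sub.1 (y - f) (x - y); rewrite [y - f + _]addrC addrA subrK.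
have := p_le (x - y); have : Lam * `|x - y| <= e by rewrite -ler_pdivlMl // mulrC ltW.
rewrite /unit_ball /= in y1; lra.
Qed.

Lemma convex_unit_ball : Defs.convex_set unit_ball.
Proof.
move=> x y t x1 y1 t0 t1; rewrite /unit_ball /=.
have -> : t *: x + (1 - t) *: y - f = t *: (x - f) + (1 - t) *: (y - f).
  by apply/matrixP => i j; rewrite !mxE; ring.
apply: le_trans (p_sub.1 _ _) _.
have := p_sub.2 t (x - f) t0; have := p_sub.2 (1 - t) (y - f); rewrite subr_ge0 => /(_ t1).
rewrite /unit_ball /= in x1 y1; nra.
Qed.

Lemma Cn_unit_ball : Cn unit_ball.
Proof.
split; first exact: closed_unit_ball.
by split; [exact: convex_unit_ball | exists f; exact: interior_unit_ball].
Qed.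

Lemma gauge_unit_ball r : gauge (translate unit_ball f) r = p r.
Proof.
have mem l : 0 < l -> p r <= l -> gauge_set (translate unit_ball f) r l.
  move=> l0 rl; split => //; exists (l^-1 *: r); split.
    exists (f + l^-1 *: r); last by rewrite addrC addKr.
    rewrite /unit_ball /= addrC addKr sublinearZ ?invr_gt0 //.
    by rewrite ler_pdivrMl // mulr1.
  by rewrite scalerA mulfV ?gt_eqF // scale1r.
apply/eqP; rewrite eq_le; apply/andP; split.
  apply/ler_addgt0Pr => e e0; apply: ge_inf; first by exists 0 => l [/ltW].
  by apply: mem; [apply: lt_le_trans e0 _; rewrite lerDr | rewrite lerDl ltW].
apply: lb_le_inf; first by exists (p r + 1); apply: mem; rewrite ?ltr_pwDr ?lerDl.
move=> l [l0 [b [[c c1 <-] ->]]].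
by rewrite sublinearZ // -[leRHS]mulr1 ler_wpM2l // ltW.
Qed.

End Sublinear.

Lemma gauge_selection (R : realType) (n : nat) (Ks : nat -> set 'cV[R]_n) f :
  (forall N, absorbing_convex (Ks N)) ->
  (forall y, exists c, forall N, gauge (Ks N) y <= c) ->
  exists2 phi : nat -> nat, (forall N, (N <= phi N)%N) &
    exists2 C, Cn C /\ interior C f &
      forall r, (fun N => gauge (Ks (phi N)) r) @ \oo --> gauge (translate C f) r.
Proof.
move=> hK hb; have [Lam Lam0 K_le] := gauge_uniform_bound hK hb.
have [phi phi_infl K_cvg] : exists2 phi : nat -> nat, (forall N, (N <= phi N)%N) &
    forall x, cvgn (fun N => gauge (Ks (phi N)) x).
  apply: (@equilipschitz_cvg_extraction _ _ (fun N => gauge (Ks N)) _ Lam0).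
    by move=> N x; rewrite ger0_norm ?(gauge_ge0 (hK N)).
  by move=> N x y; apply: (gauge_lipschitz (hK N)); exact: K_le.
pose psi x := limn (fun N => gauge (Ks (phi N)) x).
have psi_sub : sublinear psi.
  by apply: (sublinear_limn _ K_cvg) => N; exact: gauge_sublinear.
have psi_ge0 x : 0 <= psi x.
  by apply: limr_ge (K_cvg x) _; apply: nearW => N; exact: gauge_ge0.
have psi_le x : psi x <= Lam * `|x|.
  by apply: limr_le (K_cvg x) _; apply: nearW => N; exact: K_le.
exists phi => //; exists (unit_ball psi f).
  split; first exact: Cn_unit_ball psi_sub Lam0 psi_le f.
  exact: interior_unit_ball Lam0 psi_le f.
by move=> r; rewrite gauge_unit_ball //; exact: K_cvg.
Qed.

Section Polyhedron.
Variables (R : realType) (n : nat).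
Notation vec := 'cV[R]_n.
Variables (V W : seq vec) (L : set vec) (f : vec).
Hypothesis LE : L = minkowski_sum (conv_hull V) (cone_hull W).

Lemma polyhedron_vertex (i : 'I_(size V)) : L V`_i.
Proof.
rewrite LE; exists V`_i; last first.
  exists 0; last by rewrite addr0.
  by exists (fun=> 0); split => //; rewrite big1 // => j _; rewrite scale0r.
exists (fun k => (k == i)%:R); split; first by move=> k; rewrite ler0n.
split; first by rewrite (bigD1 i) //= eqxx big1 ?addr0 // => k /negbTE ->.
by rewrite (bigD1 i) //= eqxx scale1r big1 ?addr0 // => k /negbTE ->; rewrite scale0r.
Qed.

Lemma polyhedron_add_ray x (j : 'I_(size W)) t : L x -> 0 <= t -> L (x + t *: W`_j).
Proof.
rewrite LE => -[a Va [c [mu [mu0 ->]]] <-] t0.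
exists a => //; rewrite -addrA; exists (\sum_k mu k *: W`_k + t *: W`_j) => //.
exists (fun k => mu k + (k == j)%:R * t); split.
  by move=> k; rewrite addr_ge0 // mulr_ge0 // ler0n.
under [RHS]eq_bigr do rewrite scalerDl; rewrite big_split /=; congr (_ + _).
by rewrite (bigD1 j) //= eqxx mul1r big1 ?addr0 // => k /negbTE ->; rewrite mul0r scale0r.
Qed.

Lemma gauge_polyhedron_le x : L x -> exists2 M, 0 <= M & forall K b c,
  absorbing_convex K -> (forall i : 'I_(size V), gauge K (V`_i - f) <= b) ->
  (forall j : 'I_(size W), gauge K W`_j <= c) -> 0 <= c ->
  gauge K (x - f) <= b + c * M.
Proof.
rewrite LE => -[_ [lam [lam0 [lam1 ->]]] [_ [mu [mu0 ->]]] <-].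
have -> : \sum_i lam i *: V`_i + \sum_j mu j *: W`_j - f =
    \sum_i lam i *: (V`_i - f) + \sum_j mu j *: W`_j.
  rewrite addrAC; congr (_ + _); under [RHS]eq_bigr do rewrite scalerBr.
  by rewrite sumrB -scaler_suml lam1 scale1r.
exists (\sum_j mu j) => [|K b c hK hV hW c0]; first exact: sumr_ge0.
apply: le_trans (gaugeD hK _ _) _; apply: lerD.
  apply: le_trans (gauge_sum hK _ lam0) _.
  apply: le_trans (ler_sum _ (fun i _ => ler_wpM2l (lam0 i) (hV i))) _.
  by rewrite -mulr_suml lam1 mul1r.
apply: le_trans (gauge_sum hK _ mu0) _.
by rewrite mulr_sumr; apply: ler_sum => j _; rewrite [leRHS]mulrC ler_wpM2l.
Qed.

Lemma gauge_polyhedron_vertex (i : 'I_(size V)) : gauge (translate L f) (V`_i - f) <= 1.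
Proof.
apply: gauge_le; split => //; exists (V`_i - f); rewrite scale1r; split => //.
by exists V`_i => //; exact: polyhedron_vertex.
Qed.

Lemma gauge_polyhedron_ray (j : 'I_(size W)) : L f -> gauge (translate L f) W`_j <= 0.
Proof.
move=> Lf; apply/ler_addgt0Pr => e e0; rewrite add0r; apply: gauge_le; split => //.
exists (e^-1 *: W`_j); split; last by rewrite scalerA mulfV ?gt_eqF // scale1r.
exists (f + e^-1 *: W`_j); last by rewrite addrC addKr.
by apply: polyhedron_add_ray => //; rewrite invr_ge0 ltW.
Qed.

Lemma gauge_polyhedron_sum_le b c : L f -> 0 < b -> 0 <= c ->
  \sum_(i < size V) b^-1 * gauge (translate L f) (V`_i - f) +
  \sum_(j < size W) c * gauge (translate L f) W`_j <= (size V)%:R / b.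
Proof.
move=> Lf b0 c0; rewrite -[leRHS]addr0; apply: lerD.
  apply: (@le_trans _ _ (\sum_(i < size V) b^-1 * 1)).
    apply: ler_sum => i _; apply: ler_wpM2l; first by rewrite invr_ge0 ltW.
    exact: gauge_polyhedron_vertex.
  by rewrite mulr1 sumr_const card_ord mulr_natl.
by apply: sumr_le0 => j _; rewrite mulr_ge0_le0 // gauge_polyhedron_ray.
Qed.

Lemma polyhedron_gauge_bounded (Ks : nat -> set vec) b c : interior L f ->
  (forall N, absorbing_convex (Ks N)) ->
  (forall N (i : 'I_(size V)), gauge (Ks N) (V`_i - f) <= b) ->
  (forall N (j : 'I_(size W)), gauge (Ks N) W`_j <= c) -> 0 <= c ->
  forall y, exists c', forall N, gauge (Ks N) y <= c'.
Proof.
move=> Lf hK hV hW c0 y; have [t t0 Lt] := interior_ray y Lf.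
have [M M0 hM] := gauge_polyhedron_le Lt.
exists (t^-1 * (b + c * M)) => N.
have -> : y = t^-1 *: (f + t *: y - f).
  by rewrite addrC addKr scalerA mulVf ?gt_eqF // scale1r.
apply: le_trans (gaugeZ (hK N) _ _) _; first by rewrite invr_ge0 ltW.
by rewrite ler_pM2l ?invr_gt0 //; apply: hM.
Qed.

End Polyhedron.

Section Rho.
Variables (R : realType) (n : nat).
Notation vec := 'cV[R]_n.
Implicit Types (calB : set (set vec)) (B C L : set vec) (f : vec).

Definition cols_mx m (X : 'I_m -> vec) : 'M[R]_(n, m) := \matrix_(r, i) X i r ord0.

Lemma col_cols_mx m (X : 'I_m -> vec) i : col i (cols_mx X) = X i.
Proof. by apply/matrixP => r c; rewrite !mxE (ord1 c). Qed.

Lemma sum_col_mx_row_mx p q (s1 : 'cV[R]_p) (s2 : 'cV[R]_q)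
    (A1 : 'M[R]_(n, p)) (A2 : 'M[R]_(n, q)) (g : vec -> R) :
  \sum_(j < p + q) col_mx s1 s2 j ord0 * g (col j (row_mx A1 A2)) =
  \sum_(i < p) s1 i ord0 * g (col i A1) + \sum_(j < q) s2 j ord0 * g (col j A2).
Proof.
rewrite big_split_ord /=; congr (_ + _); apply: eq_bigr => i _.
  by rewrite col_mxEu colKl.
by rewrite col_mxEd colKr.
Qed.

Lemma CcalBN_member calB f k (Rm : 'M[R]_(n, k)) (s : 'cV[R]_k) :
  (forall j, 0 <= s j ord0) -> ~ CcalB calB f Rm s ->
  exists2 B, calB B &
    interior B f /\ \sum_(j < k) s j ord0 * gauge (translate B f) (col j Rm) < 1.
Proof.
move=> s0; apply: contra_notP => hB; split => // B cB; split => // Bf.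
by rewrite leNgt; apply/negP => lt1; apply: hB; exists B.
Qed.

Lemma scale_CBN L f k (Rm : 'M[R]_(n, k)) (s : 'cV[R]_k) a : 0 < a -> interior L f ->
  a * \sum_(j < k) s j ord0 * gauge (translate L f) (col j Rm) < 1 ->
  ~ scale_set a^-1 (CB L f Rm) s.
Proof.
move=> a0 Lf lt1 [c [_ /(_ Lf) c1] cs]; move: lt1; rewrite -cs.
under eq_bigr do rewrite mxE -mulrA.
by rewrite -mulr_sumr mulrA mulfV ?gt_eqF // mul1r ltNge c1.
Qed.

Lemma rho_gen_ge0 (C1 C2 : forall k, 'M[R]_(n, k) -> set 'cV[R]_k) :
  (0 <= rho_gen C1 C2)%E.
Proof. by apply: le_ereal_inf_tmp => _ [a [a0 _] <-]; rewrite lee_fin ltW. Qed.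

Lemma rho_fam_f_le calB L f B : calB B -> (rho_fam_f f calB L <= rho_f f B L)%E.
Proof.
move=> cB; apply: ereal_inf_le_tmp => _ [a [a0 Ha] <-].
by exists a => //; split => // k Rm s [_ hs]; exact: Ha (hs B cB).
Qed.

Lemma rho_f_le C L f b : 0 < b -> interior C f ->
    (forall r, gauge (translate C f) r <= b * gauge (translate L f) r) ->
  (rho_f f C L <= b%:E)%E.
Proof.
move=> b0 Cf hC; apply: ereal_inf_lbound; exists b => //; split => // k Rm s [s0 sC].
exists (b *: s); last by rewrite scalerA mulVf ?gt_eqF // scale1r.
split=> [j|_]; first by rewrite mxE mulr_ge0 // ltW.
apply: le_trans (sC Cf) _; apply: ler_sum => j _.
by rewrite mxE -mulrA mulrCA ler_wpM2l.
Qed.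

Lemma rho_f_le0 B L f : ~ interior L f -> (rho_f f B L <= 0)%E.
Proof.
move=> Lf; apply/lee_addgt0Pr => e e0; rewrite add0e.
apply: ereal_inf_lbound; exists e => //; split => // k Rm s [s0 _].
exists (e *: s); last by rewrite scalerA mulVf ?gt_eqF // scale1r.
by split => [j|/Lf //]; rewrite mxE mulr_ge0 // ltW.
Qed.

Lemma rho_fam_f_set0 L f : interior L f -> rho_fam_f f set0 L = +oo%E.
Proof.
(* With no columns (k = 0), C_L is empty while C_set0 is the whole orthant. *)
move=> Lf; apply/eqP; rewrite eq_le leey /=; apply: le_ereal_inf_tmp.
move=> _ [a [a0 Ha] <-]; have [|c [_ /(_ Lf)]] := Ha 0%N 0 0.
  by split => [[]|B []].
by rewrite big_ord0 ler10.
Qed.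

Lemma rho_fam_f_le_rho calB L f : ~ inZn f -> (rho_fam_f f calB L <= rho calB L)%E.
Proof. by move=> fZ; apply: ereal_sup_ubound; exists f. Qed.

Lemma rho_le_sup_inf_rho calB L : (rho calB L <= sup_inf_rho calB L)%E.
Proof.
apply: ge_ereal_sup => _ [f fZ <-].
apply: le_trans (ereal_sup_ubound (ex_intro2 _ _ f fZ erefl)).
by apply: le_ereal_inf_tmp => _ [B cB <-]; exact: rho_fam_f_le.
Qed.

End Rho.

Lemma ler_sum_term (R : realType) m (F : 'I_m -> R) j :
  (forall k, 0 <= F k) -> F j <= \sum_k F k.
Proof. by move=> F0; rewrite (bigD1 j) //= lerDl sumr_ge0. Qed.

Section Construction.
Variables (R : realType) (n : nat).
Notation vec := 'cV[R]_n.
Variables (calB : set (set vec)) (L : set vec) (V W : seq vec) (f : vec) (a b : R).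
Hypotheses (calB_Cn : calB `<=` @Cn R n) (calB_closed : f_closed f calB).
Hypotheses (LE : L = minkowski_sum (conv_hull V) (cone_hull W)) (Lf : interior L f).
Hypotheses (a0 : 0 < a) (ab : (size V)%:R * a < b).
Hypothesis a_adm :
  forall k (Rm : 'M[R]_(n, k)), CcalB calB f Rm `<=` scale_set a^-1 (CB L f Rm).

Let b0 : 0 < b.
Proof. by apply: le_lt_trans ab; rewrite mulr_ge0 // ltW. Qed.

Let member_absorbing_convex B : calB B -> interior B f -> absorbing_convex (translate B f).
Proof. by move=> /calB_Cn [_ [Bc _]]; exact: translate_absorbing_convex. Qed.

Lemma exists_member_gauge_lt N : exists B, [/\ calB B, interior B f,
  forall i : 'I_(size V), gauge (translate B f) (V`_i - f) < b &
  forall j : 'I_(size W), gauge (translate B f) W`_j < N.+1%:R^-1].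
Proof.
pose Rm := row_mx (cols_mx (fun i : 'I_(size V) => V`_i - f))
                  (cols_mx (fun j : 'I_(size W) => W`_j)).
pose s : 'cV[R]_(size V + size W) := col_mx (const_mx b^-1) (const_mx N.+1%:R).
have sumE (g : vec -> R) : \sum_j s j ord0 * g (col j Rm) =
    \sum_(i < size V) b^-1 * g (V`_i - f) + \sum_(j < size W) N.+1%:R * g W`_j.
  rewrite sum_col_mx_row_mx.
  by congr (_ + _); apply: eq_bigr => i _; rewrite mxE col_cols_mx.
have s0 j : 0 <= s j ord0.
  rewrite -[j]splitK; case: (fintype.split j) => k /=.
    by rewrite col_mxEu mxE invr_ge0 ltW.
  by rewrite col_mxEd mxE.
have sL : a * \sum_j s j ord0 * gauge (translate L f) (col j Rm) < 1.
  rewrite sumE; apply: (@le_lt_trans _ _ (a * ((size V)%:R / b))).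
    by rewrite ler_pM2l // (gauge_polyhedron_sum_le LE (interior_subset Lf) b0).
  by rewrite mulrA mulrC ltr_pdivrMl // mulr1 mulrC.
have [B cB [Bf]] := CcalBN_member s0 (fun sB => scale_CBN a0 Lf sL (a_adm sB)).
rewrite sumE => sB; have hB := member_absorbing_convex cB Bf.
have termV (i : 'I_(size V)) : 0 <= b^-1 * gauge (translate B f) (V`_i - f).
  by apply: mulr_ge0; [rewrite invr_ge0 ltW | exact: gauge_ge0].
have termW (j : 'I_(size W)) : 0 <= N.+1%:R * gauge (translate B f) W`_j.
  by apply: mulr_ge0; [exact: ler0n | exact: gauge_ge0].
have sV : 0 <= \sum_(i < size V) b^-1 * gauge (translate B f) (V`_i - f).
  by apply: sumr_ge0 => i _; exact: termV.
have sW : 0 <= \sum_(j < size W) N.+1%:R * gauge (translate B f) W`_j.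
  by apply: sumr_ge0 => j _; exact: termW.
exists B; split => // [i|j].
  have : b^-1 * gauge (translate B f) (V`_i - f) < 1.
    by have := ler_sum_term i termV; lra.
  by rewrite mulrC ltr_pdivrMr // mul1r.
by rewrite -[_^-1]mulr1 ltr_pdivlMl //; have := ler_sum_term j termW; lra.
Qed.

Lemma exists_member_gauge_le : exists2 C, calB C &
  interior C f /\ forall r, gauge (translate C f) r <= b * gauge (translate L f) r.
Proof.
have /choice [Bs hBs] := exists_member_gauge_lt.
have Bsf N : calB (Bs N) /\ interior (Bs N) f by have [] := hBs N.
have hK N : absorbing_convex (translate (Bs N) f).
  by have [cB Bf] := Bsf N; exact: member_absorbing_convex.
have BsV N (i : 'I_(size V)) : gauge (translate (Bs N) f) (V`_i - f) <= b.
  by have [_ _ hV _] := hBs N; exact: ltW (hV i).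
have BsW N (j : 'I_(size W)) : gauge (translate (Bs N) f) W`_j <= N.+1%:R^-1.
  by have [_ _ _ hW] := hBs N; exact: ltW (hW j).
have Bs_bounded : forall y, exists c, forall N, gauge (translate (Bs N) f) y <= c.
  apply: (polyhedron_gauge_bounded LE Lf hK BsV) => [N j|]; last exact: ler01.
  by apply: le_trans (BsW N j) _; rewrite invf_le1 // ler1n.
have [phi phi_infl [C [CCn Cf] C_cvg]] := gauge_selection f hK Bs_bounded.
have [cC _] := @calB_closed (fun N => Bs (phi N)) C (fun N => Bsf (phi N)) CCn Cf C_cvg.
have C_le r c : (\forall N \near \oo, gauge (translate (Bs (phi N)) f) r <= c) ->
    gauge (translate C f) r <= c.
  by rewrite -(cvg_lim _ (C_cvg r)) //; apply: limr_le; exact: cvgP (C_cvg r).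
exists C => //; split => //.
have [Cc _] := CCn.2; have hC := translate_absorbing_convex Cc Cf.
apply: (gauge_le_mul_gauge hC (translate_absorbing Lf) b0) => _ [x Lx <-].
have [M M0 hM] := gauge_polyhedron_le f LE Lx.
rewrite -[b]addr0 -(mul0r M); apply: hM => // [i|j].
  by apply: C_le; apply: nearW => N; exact: BsV.
apply/ler_addgt0Pr => e e0; rewrite add0r; apply: C_le.
apply: filterS (near_infty_natSinv_lt (PosNum e0)) => N /ltW; apply: le_trans.
apply: le_trans (BsW _ j) _; rewrite lef_pV2 ?posrE // ler_nat ltnS; exact: phi_infl.
Qed.

End Construction.

Lemma exists_nonintegral_interior (R : realType) (n : nat) (L : set 'cV[R]_n) :
  Cn L -> (exists f : 'cV[R]_n, ~ inZn f) -> exists2 g, ~ inZn g & interior L g.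
Proof.
move=> [_ [_ [x Lx]]] [f0 f0Z].
have [xZ|] := pselect (inZn x); last by exists x.
have [i f0i] : exists i : 'I_n, ~ (f0 i ord0 \is a Num.int) by apply/existsNP.
have /interior_normP [e e0 hL] : (interior L)° x.
  by move: (open_interior L); rewrite openE; apply.
pose t := Num.min e 1 / 2.
have t0 : 0 < t by rewrite divr_gt0 // lt_min e0 ltr01.
have [te t1] : t < e /\ t < 1.
  have : Num.min e 1 <= e by rewrite ge_min lexx.
  have : Num.min e 1 <= 1 by rewrite ge_min lexx orbT.
  rewrite /t; lra.
exists (x + t *: delta_mx i ord0); last first.
  apply: hL; apply: norm_lt_entries => // k; rewrite !mxE.
  by case: (k == i); rewrite /= ?mulr1 ?mulr0 ?normr0 ?gtr0_norm.
move=> /(_ i); rewrite !mxE eqxx mulr1 => /rpredB /(_ (xZ i)).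
rewrite addrAC subrr add0r => /intrP [m tm].
by move: t0 t1; rewrite tm ltr0z ltrz1 gtz0_ge1 => /le_lt_trans h /h; rewrite ltxx.
Qed.

Lemma rho_set0 (R : realType) (n : nat) (L : set 'cV[R]_n) :
  Cn L -> (exists f : 'cV[R]_n, ~ inZn f) -> rho set0 L = +oo%E.
Proof.
move=> LCn /(exists_nonintegral_interior LCn) [g gZ Lg]; apply/eqP; rewrite eq_le leey /=.
by rewrite -(rho_fam_f_set0 Lg); exact: rho_fam_f_le_rho.
Qed.

Lemma inf_rho_f_le_rho_fam_f (R : realType) (n : nat) (calB : set (set 'cV[R]_n))
    (L : set 'cV[R]_n) (V W : seq 'cV[R]_n) f :
  calB `<=` @Cn R n -> f_closed f calB ->
  L = minkowski_sum (conv_hull V) (cone_hull W) -> interior L f -> (0 < size V)%N ->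
  (ereal_inf [set rho_f f B L | B in calB] <= (size V)%:R%:E * rho_fam_f f calB L)%E.
Proof.
move=> calB_Cn calB_closed LE Lf V0; set I := ereal_inf _.
have Vpos : 0 < (size V)%:R :> R by rewrite ltr0n.
suff : ((size V)%:R^-1%:E * I <= rho_fam_f f calB L)%E.
  move=> /(lee_wpmul2l (x := (size V)%:R%:E)); rewrite lee_fin ler0n => /(_ isT).
  by rewrite muleA -EFinM mulfV ?gt_eqF // mul1e.
apply: le_ereal_inf_tmp => _ [a [a0 a_adm] <-].
have : (I <= ((size V)%:R * a)%:E)%E.
  apply/lee_addgt0Pr => e e0.
  have Vae : (size V)%:R * a < (size V)%:R * a + e by rewrite ltrDl.
  have [C cC [Cf hC]] := exists_member_gauge_le calB_Cn calB_closed LE Lf a0 Vae a_adm.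
  apply: le_trans (ereal_inf_lbound (ex_intro2 _ _ C cC erefl)) _.
  by rewrite -EFinD; apply: rho_f_le Cf hC; apply: le_lt_trans Vae; rewrite mulr_ge0 ?ltW.
move=> /(lee_wpmul2l (x := (size V)%:R^-1%:E)); rewrite lee_fin invr_ge0 ler0n => /(_ isT).
by rewrite -EFinM mulrA mulVf ?gt_eqF // mul1r.
Qed.

Lemma inf_rho_f_le_rho (R : realType) (n : nat) (calB : set (set 'cV[R]_n))
    (L : set 'cV[R]_n) (V W : seq 'cV[R]_n) f m :
  calB `<=` @Cn R n -> (forall g, ~ inZn g -> f_closed g calB) -> Cn L ->
  L = minkowski_sum (conv_hull V) (cone_hull W) -> (0 < size V)%N -> (size V <= m)%N ->
  ~ inZn f -> (ereal_inf [set rho_f f B L | B in calB] <= m%:R%:E * rho calB L)%E.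
Proof.
move=> calB_Cn calB_closed LCn LE V0 Vm fZ.
have rho_ge := rho_fam_f_le_rho calB L fZ.
have rho0 : (0 <= rho calB L)%E := le_trans (rho_gen_ge0 _ _) rho_ge.
have m0 : (0 <= m%:R%:E :> \bar R)%E by rewrite lee_fin ler0n.
have [Lf|Lf] := pselect (interior L f).
  apply: le_trans (inf_rho_f_le_rho_fam_f calB_Cn (calB_closed f fZ) LE Lf V0) _.
  apply: le_trans (lee_wpmul2l m0 rho_ge).
  by apply: lee_wpmul2r; [exact: rho_gen_ge0 | rewrite lee_fin ler_nat].
have [[B0 cB0]|calB0] := pselect (calB !=set0).
  apply: le_trans (ereal_inf_lbound (ex_intro2 _ _ B0 cB0 erefl)) _.
  by apply: le_trans (rho_f_le0 _ Lf) _; exact: mule_ge0.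
have -> : calB = set0 by apply/seteqP; split => // B cB; apply: calB0; exists B.
rewrite rho_set0 //; last by exists f.
by rewrite mulry gtr0_sg ?mul1e ?leey // ltr0n; apply: leq_trans Vm.
Qed.

Theorem corollary4p3 (R : realType) (n : nat) (calB : set (set 'cV[R]_n))
  (L : set 'cV[R]_n) (V W : seq 'cV[R]_n) :
  calB `<=` @Cn R n ->
  (forall f : 'cV[R]_n, ~ inZn f -> f_closed f calB) ->
  Cn L ->
  V != [::] -> uniq V -> uniq W -> 0 \notin W ->
  L = minkowski_sum (conv_hull V) (cone_hull W) ->
  ((((size V + size W + 1)%:R : R)^-1)%:E * sup_inf_rho calB L <= rho calB L)%E /\
  (rho calB L <= sup_inf_rho calB L)%E.
Proof.
move=> calB_Cn calB_closed LCn V0 _ _ _ LE.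
split; last exact: rho_le_sup_inf_rho.
set m := (size V + size W + 1)%N.
have m0 : 0 < m%:R :> R by rewrite ltr0n /m addn1.
have : (sup_inf_rho calB L <= m%:R%:E * rho calB L)%E.
  apply: ge_ereal_sup => _ [f fZ <-].
  apply: (inf_rho_f_le_rho calB_Cn calB_closed LCn LE) fZ.
    by case: (V) V0.
  by rewrite /m -addnA leq_addr.
move=> /(lee_wpmul2l (x := m%:R^-1%:E)); rewrite lee_fin invr_ge0 ltW // => /(_ isT).
by rewrite muleA -EFinM mulVf ?gt_eqF // mul1e.
Qed.
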